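(* Let $S$ be a compact Hausdorff space and $K\subset S$ a closed subset which is a retract of $S$ and is a zero-set of $S$. Then there exists a U-embedding from $C(K)$ into $C(S)$.
   Context: $C(K)$, $C(S)$ carry the sup norm. $K$ is a retract of $S$ if there is a continuous onto $r\colon S\to K$ with $r(k)=k$ for all $k\in K$. $K$ is a zero-set of $S$ if $K=\{t\in S: f(t)=0\}$ for some $f\in C(S)$. A linear isometry $T\colon X\to Y$ is a U-embedding if every $x^*\in X^*$ has a unique $y^*\in Y^*$ with $T^*(y^* )=x^*$ and $\|y^*\|=\|x^*\|$. *)

From HB Require Import structures.
From mathcomp Require Import all_boot all_order all_algebra.
From mathcomp Require Import all_classical all_reals all_analysis.
Set Implicit Arguments. Unset Strict Implicit. Unset Printing Implicit Defensive.
Import Order.TTheory GRing.Theory Num.Theory numFieldNormedType.Exports.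
Local Open Scope classical_set_scope.
Local Open Scope ring_scope.

Definition subK (S : topologicalType) (K : set S) : Type := {x : S | K x}.
HB.instance Definition _ (S : topologicalType) (K : set S) :=
  gen_eqMixin (subK K).
HB.instance Definition _ (S : topologicalType) (K : set S) :=
  gen_choiceMixin (subK K).

Definition Ktop (S : topologicalType) (K : set S) : topologicalType :=
  initial_topology (@proj1_sig S K : subK K -> S).

(* C(X) = continuous real functions on X; sup norm. *)
Definition supnorm (R : realType) (X : topologicalType) (f : X -> R) : R :=
  sup [set `|f x| | x in [set: X]].

Definition bdd_functional (R : realType) (X : topologicalType)
    (phi : (X -> R) -> R) : Prop :=
  (forall (a : R) (f g : X -> R), continuous f -> continuous g ->
     phi (fun x => a * f x + g x) = a * phi f + phi g) /\
  exists M : R, forall f : X -> R, continuous f -> `|phi f| <= M * supnorm f.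

Definition fnorm (R : realType) (X : topologicalType)
    (phi : (X -> R) -> R) : R :=
  sup [set `|phi f| | f in [set f : X -> R | continuous f /\ supnorm f <= 1]].

Definition feq (R : realType) (X : topologicalType)
    (phi psi : (X -> R) -> R) : Prop :=
  forall f : X -> R, continuous f -> phi f = psi f.

Definition lin_isometry (R : realType) (X Y : topologicalType)
    (T : (X -> R) -> (Y -> R)) : Prop :=
  (forall f, continuous f -> continuous (T f)) /\
  (forall (a : R) (f g : X -> R), continuous f -> continuous g ->
     T (fun x => a * f x + g x) = (fun y => a * T f y + T g y)) /\
  (forall f, continuous f -> supnorm (T f) = supnorm f).

(* U-embedding: every x^* has a unique norm-preserving y^* with T^* y^* = x^*,
   where T^* y^* = y^* \o T. *)
Definition U_embedding (R : realType) (X Y : topologicalType)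
    (T : (X -> R) -> (Y -> R)) : Prop :=
  lin_isometry T /\
  forall xs : (X -> R) -> R, bdd_functional xs ->
    exists ys : (Y -> R) -> R,
      [/\ bdd_functional ys, feq (fun f => ys (T f)) xs,
          fnorm ys = fnorm xs &
          forall zs : (Y -> R) -> R, bdd_functional zs ->
            feq (fun f => zs (T f)) xs -> fnorm zs = fnorm xs -> feq zs ys].

Definition is_retract (S : topologicalType) (K : set S) : Prop :=
  exists r : S -> S, [/\ continuous r, range r = K & forall k, K k -> r k = k].

Definition is_zero_set (R : realType) (S : topologicalType) (K : set S) : Prop :=
  exists f : S -> R, continuous f /\ K = f @^-1` [set 0].

(* With g a function whose zero set is K, p = 1 / (1 + |g|) equals 1 exactly on K,
   and T f = (f o r) * p is a linear isometry C(K) -> C(S) with (T f)|K = f; hence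
   h |-> x^*(h|K) is a norm-preserving extension of x^*.  Any norm-preserving
   extension z^* is almost normed by functions dominated by p, so perturbing them
   by +-v shows that z^* kills every v with |v| <= 1 - p.  A function k vanishing
   on K is d-close to its soft thresholding at level d, which vanishes near K,
   where 1 - p is bounded below by compactness; so |z^*(k)| <= ||z^*|| d for all
   d > 0, and z^*(h) = z^*(T(h|K)) = x^*(h|K). *)

From HB Require Import structures.
From mathcomp Require Import all_boot all_order all_algebra.
From mathcomp Require Import all_classical all_reals all_analysis.
From mathcomp Require Import lra.
Import Order.TTheory GRing.Theory Num.Theory numFieldNormedType.Exports.
Local Open Scope classical_set_scope.
Local Open Scope ring_scope.

Section ContinuousPointwise.
Context {R : numFieldType} {X : topologicalType}.
Implicit Types f g : X -> R.

Lemma continuous_cstf (c : R) : continuous (fun _ : X => c).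
Proof. exact: cst_continuous. Qed.

Lemma continuous_addf {f g} :
  continuous f -> continuous g -> continuous (fun x => f x + g x).
Proof. by move=> fc gc x; exact: (continuousD (fc x) (gc x)). Qed.

Lemma continuous_subf {f g} :
  continuous f -> continuous g -> continuous (fun x => f x - g x).
Proof. by move=> fc gc x; exact: (continuousB (fc x) (gc x)). Qed.

Lemma continuous_mulf {f g} :
  continuous f -> continuous g -> continuous (fun x => f x * g x).
Proof. by move=> fc gc x; exact: (continuousM (fc x) (gc x)). Qed.

Lemma continuous_scalef (c : R) {f} : continuous f -> continuous (fun x => c * f x).
Proof. exact/continuous_mulf/continuous_cstf. Qed.

Lemma continuous_normf {f} : continuous f -> continuous (fun x => `|f x|).
Proof. by move=> fc x; exact: (continuous_comp (fc x) (@norm_continuous _ R _)). Qed.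

Lemma continuous_invf {f} :
  (forall x, f x != 0) -> continuous f -> continuous (fun x => (f x)^-1).
Proof. by move=> f_neq0 fc x; exact: (continuousV (f_neq0 x) (fc x)). Qed.

End ContinuousPointwise.

Section CompactDomain.
Context {R : realType} {S : topologicalType}.
Hypothesis S_compact : compact [set: S].

Lemma continuous_bounded {h : S -> R} :
  continuous h -> exists C : R, forall s, `|h s| <= C.
Proof.
move=> hc; have : compact (h @` setT).
  by apply: continuous_compact => //; exact: continuous_subspaceT.
move=> /compact_bounded [M [_ HM]]; exists (M + 1) => s.
by apply: (HM (M + 1)); [lra | exists s].
Qed.

Lemma continuous_pos_lbound {F : S -> R} :
  continuous F -> (forall s, 0 < F s) -> exists2 t : R, 0 < t & forall s, t <= F s.
Proof.
move=> Fc F_gt0.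
have [C HC] := continuous_bounded (continuous_invf (fun s => lt0r_neq0 (F_gt0 s)) Fc).
have C1_gt0 : 0 < `|C| + 1 by rewrite ltr_wpDl.
exists (`|C| + 1)^-1; first by rewrite invr_gt0.
move=> s; rewrite -[F s]invrK lef_pV2 ?posrE ?invr_gt0 //.
apply: le_trans (ler_norm _) _; apply: le_trans (HC s) _.
by apply: le_trans (ler_norm C) _; rewrite lerDl.
Qed.

End CompactDomain.

Section SupNorm.
Context {R : realType} {X : topologicalType}.
Implicit Types f : X -> R.

Lemma supnorm_ge0 f : 0 <= supnorm f.
Proof.
rewrite /supnorm; have [f_sup|no_sup] :=
  pselect (has_sup [set `|f x| | x in [set: X]]); last by rewrite sup_out.
have [[_ [x _ _]] _] := f_sup.
by apply: le_trans (normr_ge0 (f x)) _; apply: sup_upper_bound => //; exists x.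
Qed.

(* The bound is needed: the [sup] of an unbounded set is [0]. *)
Lemma ler_supnorm {f} {C : R} :
  (forall y, `|f y| <= C) -> forall x, `|f x| <= supnorm f.
Proof.
move=> f_le_C x; apply: sup_upper_bound; last by exists x.
by split; [exists `|f x|, x | exists C => _ [y _ <-]].
Qed.

Lemma supnorm_le f (c : R) : 0 <= c -> (forall x, `|f x| <= c) -> supnorm f <= c.
Proof.
move=> c_ge0 f_le_c; rewrite /supnorm.
have [[y img_y]|img0] := pselect ([set `|f x| | x in [set: X]] !=set0).
  by apply: ge_sup => [|_ [x _ <-]]; [exists y|].
suff -> : [set `|f x| | x in [set: X]] = set0 by rewrite sup0.
by apply/seteqP; split => // y Ey; apply: img0; exists y.
Qed.

End SupNorm.

Section BoundedFunctional.
Context {R : realType} {X : topologicalType}.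
Context {phi : (X -> R) -> R} (phi_bdd : bdd_functional phi).

Lemma bdd_functional_lin (a : R) {f g : X -> R} : continuous f -> continuous g ->
  phi (fun x => a * f x + g x) = a * phi f + phi g.
Proof. exact: phi_bdd.1. Qed.

Lemma bdd_functional0 : phi (fun _ => 0) = 0.
Proof.
have := bdd_functional_lin 1 (continuous_cstf 0) (continuous_cstf 0).
under eq_fun do rewrite mulr0 addr0.
by rewrite mul1r -{1}[phi _]addr0 => /addrI /esym.
Qed.

Lemma bdd_functionalZ (a : R) {f : X -> R} :
  continuous f -> phi (fun x => a * f x) = a * phi f.
Proof.
move=> fc; have := bdd_functional_lin a fc (continuous_cstf 0).
by under eq_fun do rewrite addr0; rewrite bdd_functional0 addr0.
Qed.

Lemma bdd_functionalD {f g : X -> R} : continuous f -> continuous g ->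
  phi (fun x => f x + g x) = phi f + phi g.
Proof.
move=> fc gc; have := bdd_functional_lin 1 fc gc.
by under eq_fun do rewrite mul1r; rewrite mul1r.
Qed.

Let unit_ball_values :=
  [set `|phi f| | f in [set f : X -> R | continuous f /\ supnorm f <= 1]].

Let unit_ball_has_sup : has_sup unit_ball_values.
Proof.
have [_ [M phi_le]] := phi_bdd; split.
  exists `|phi (fun _ => 0)|, (fun _ => 0) => //; split; first exact: continuous_cstf.
  by apply: supnorm_le => // x; rewrite normr0.
exists `|M| => _ [f [fc f_le1] <-]; apply: le_trans (phi_le f fc) _.
apply: le_trans (ler_wpM2r (supnorm_ge0 f) (ler_norm M)) _.
by rewrite -[leRHS]mulr1 ler_wpM2l.
Qed.

Lemma fnorm_ub {f : X -> R} :
  continuous f -> supnorm f <= 1 -> `|phi f| <= fnorm phi.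
Proof. by move=> fc f_le1; apply: sup_upper_bound => //; exists f. Qed.

Lemma fnorm_ge0 : 0 <= fnorm phi.
Proof.
apply: le_trans (normr_ge0 (phi (fun _ => 0))) _.
apply: fnorm_ub; first exact: continuous_cstf.
by apply: supnorm_le => // x; rewrite normr0.
Qed.

Lemma fnorm_le {c : R} : 0 <= c ->
  (forall f, continuous f -> supnorm f <= 1 -> `|phi f| <= c) -> fnorm phi <= c.
Proof.
move=> c_ge0 phi_le_c; apply: ge_sup; first by case: unit_ball_has_sup.
by move=> _ [f [fc f_le1] <-]; exact: phi_le_c.
Qed.

Lemma fnorm_adherent {e : R} : 0 < e ->
  exists2 f, continuous f /\ supnorm f <= 1 & fnorm phi - e < `|phi f|.
Proof.
by move=> e_gt0; have [_ [f f_ball <-]] := sup_adherent e_gt0 unit_ball_has_sup; exists f.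
Qed.

Lemma ler_fnorm_supnorm {f : X -> R} {C : R} :
  continuous f -> (forall x, `|f x| <= C) -> `|phi f| <= fnorm phi * supnorm f.
Proof.
move=> fc f_le_C; have [f0|f_neq0] := eqVneq (supnorm f) 0.
  have -> : f = (fun _ => 0).
    apply/funext => x; apply/eqP; rewrite -normr_eq0 eq_le normr_ge0 andbT.
    by rewrite -f0 (ler_supnorm f_le_C).
  by rewrite bdd_functional0 normr0 mulr_ge0 ?fnorm_ge0 ?supnorm_ge0.
have f_gt0 : 0 < supnorm f by rewrite lt0r f_neq0 supnorm_ge0.
have := fnorm_ub (continuous_scalef (supnorm f)^-1 fc).
rewrite bdd_functionalZ // normrM ger0_norm ?invr_ge0 ?supnorm_ge0 //.
rewrite ler_pdivrMl // mulrC; apply; apply: supnorm_le => // x.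
rewrite normrM ger0_norm ?invr_ge0 ?supnorm_ge0 // ler_pdivrMl // mulr1.
exact: (ler_supnorm f_le_C).
Qed.

End BoundedFunctional.

Section Shrink.
Context {R : realType}.
Implicit Types e x : R.

(* Soft thresholding: moves [x] towards [0] by [e], and vanishes on [[-e, e]]. *)
Definition shrink e x : R := Order.max (x - e) 0 + Order.min (x + e) 0.

Let shrink_cases e x : 0 <= e ->
  [\/ [/\ x - e <= 0, x + e <= 0 & shrink e x = x + e],
      [/\ x - e <= 0, 0 < x + e & shrink e x = 0] |
      [/\ 0 < x - e, 0 < x + e & shrink e x = x - e]].
Proof.
move=> e_ge0; rewrite /shrink.
have [h1|h1] := lerP (x - e) 0; have [h2|h2] := lerP (x + e) 0.
- by constructor 1; rewrite add0r.
- by constructor 2; rewrite addr0.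
- by exfalso; lra.
- by constructor 3; rewrite addr0.
Qed.

Lemma shrink_small e x : `|x| <= e -> shrink e x = 0.
Proof.
move=> x_le_e; have e_ge0 : 0 <= e by exact: le_trans x_le_e.
move: x_le_e; rewrite ler_norml => /andP[? ?].
by case: (shrink_cases e x e_ge0) => -[? ? ->] //; lra.
Qed.

Lemma shrink_close e x : 0 <= e -> `|x - shrink e x| <= e.
Proof.
move=> e_ge0; rewrite ler_norml.
by case: (shrink_cases e x e_ge0) => -[? ? ->]; apply/andP; split; lra.
Qed.

Lemma norm_shrink_le e x : 0 <= e -> `|shrink e x| <= `|x|.
Proof.
move=> e_ge0; rewrite ler_norml.
case: (lerP 0 x) => [x_ge0|x_lt0]; rewrite ?(ger0_norm x_ge0) ?(ltr0_norm x_lt0);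
  by case: (shrink_cases e x e_ge0) => -[? ? ->]; apply/andP; split; lra.
Qed.

Lemma continuous_shrink {X : topologicalType} e {f : X -> R} :
  continuous f -> continuous (fun y => shrink e (f y)).
Proof.
move=> fc; apply: continuous_addf.
- exact: max_fun_continuous (continuous_subf fc (continuous_cstf e)) (continuous_cstf 0).
- exact: min_fun_continuous (continuous_addf fc (continuous_cstf e)) (continuous_cstf 0).
Qed.

End Shrink.

Definition normed_under {R : realType} {S : topologicalType}
    (zs : (S -> R) -> R) (p : S -> R) : Prop :=
  forall e, 0 < e ->
    exists2 u, continuous u /\ (forall s, `|u s| <= p s) & fnorm zs - e < zs u.

Section NormedUnder.
Context {R : realType} {S : topologicalType}.
Context {zs : (S -> R) -> R} {p : S -> R}.
Context (zs_bdd : bdd_functional zs) (zs_normed : normed_under zs p).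

Lemma normed_under_slack0 (v : S -> R) :
  continuous v -> (forall s, `|v s| <= 1 - p s) -> zs v = 0.
Proof.
move=> vc v_le; apply/eqP; rewrite -normr_le0; apply/ler_addgt0Pr => e e_gt0.
have [u [uc u_le] u_big] := zs_normed _ e_gt0.
(* [u +- v] stays in the unit ball because [|u| <= p]. *)
have zs_side (a : R) : `|a| = 1 -> a * zs v + zs u <= fnorm zs.
  move=> a1; rewrite -bdd_functional_lin //.
  apply: le_trans (ler_norm _) (fnorm_ub zs_bdd _ _).
    exact: continuous_addf (continuous_scalef a vc) uc.
  apply: supnorm_le => // s; apply: le_trans (ler_normD _ _) _.
  by rewrite normrM a1 mul1r; have := v_le s; have := u_le s; lra.
have := zs_side 1 (normr1 _); have := zs_side (-1) (normrN1 _).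
by rewrite add0r ler_norml; lra.
Qed.

Hypothesis S_compact : compact [set: S].
Hypotheses (p_cont : continuous p) (p_le1 : forall s, p s <= 1).

Lemma peak_gap {k : S -> R} {d : R} :
  continuous k -> (forall s, p s = 1 -> k s = 0) -> 0 < d ->
  exists2 t, 0 < t & forall s, d <= `|k s| -> p s <= 1 - t.
Proof.
move=> kc k0 d_gt0.
(* [F] is positive everywhere since [k] vanishes where [p = 1], so compactness
   bounds it below; where [d <= |k|] it equals [1 - p]. *)
pose F s := (1 - p s) + Order.max (d - `|k s|) 0.
have F_gt0 s : 0 < F s.
  have M_ge0 : 0 <= Order.max (d - `|k s|) 0 by rewrite le_max lexx orbT.
  have [p1|p_neq1] := eqVneq (p s) 1.
    by rewrite /F p1 k0 // normr0 subr0 subrr add0r lt_max d_gt0.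
  have : p s < 1 by rewrite lt_neqAle p_neq1 p_le1.
  by rewrite /F; lra.
have Fc : continuous F.
  apply: continuous_addf; first exact: continuous_subf (continuous_cstf 1) p_cont.
  exact: max_fun_continuous
    (continuous_subf (continuous_cstf d) (continuous_normf kc)) (continuous_cstf 0).
have [t t_gt0 t_le] := continuous_pos_lbound S_compact Fc F_gt0.
exists t => // s d_le; have := t_le s.
by rewrite /F max_r ?addr0 ?subr_le0 //; lra.
Qed.

Lemma normed_under_shrink0 {k : S -> R} {d : R} :
  continuous k -> (forall s, p s = 1 -> k s = 0) -> 0 < d ->
  zs (fun s => shrink d (k s)) = 0.
Proof.
move=> kc k0 d_gt0.
have [t t_gt0 gap] := peak_gap kc k0 d_gt0.
have [C k_le] := continuous_bounded S_compact kc.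
pose c := t / (`|C| + 1).
have c_gt0 : 0 < c by rewrite divr_gt0 // ltr_wpDl.
have kdc : continuous (fun s => shrink d (k s)) := continuous_shrink d kc.
suff : zs (fun s => c * shrink d (k s)) = 0.
  by rewrite bdd_functionalZ // => /eqP; rewrite mulf_eq0 gt_eqF //= => /eqP.
apply: normed_under_slack0; first exact: continuous_scalef.
move=> s; have [k_small|k_big] := lerP `|k s| d.
  by rewrite shrink_small // mulr0 normr0 subr_ge0.
have t_le : t <= 1 - p s by have := gap s (ltW k_big); lra.
apply: le_trans t_le; rewrite normrM gtr0_norm //; apply: le_trans (_ : c * `|C| <= t).
  apply: ler_wpM2l; first exact: ltW.
  apply: le_trans (norm_shrink_le _ _ (ltW d_gt0)) _.
  exact: le_trans (k_le s) (ler_norm C).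
by rewrite /c mulrAC ler_pdivrMr ?ltr_wpDl // ler_pM2l // lerDl.
Qed.

Lemma normed_under_annihilates {k : S -> R} :
  continuous k -> (forall s, p s = 1 -> k s = 0) -> zs k = 0.
Proof.
move=> kc k0; apply/eqP; rewrite -normr_le0; apply/ler_addgt0Pr => e e_gt0.
have N1_gt0 : 0 < fnorm zs + 1 by rewrite ltr_wpDl ?fnorm_ge0.
pose d := e / (fnorm zs + 1).
have d_gt0 : 0 < d by rewrite divr_gt0.
have kdc : continuous (fun s => shrink d (k s)) := continuous_shrink d kc.
have rc : continuous (fun s => k s - shrink d (k s)) := continuous_subf kc kdc.
have -> : zs k = zs (fun s => shrink d (k s)) + zs (fun s => k s - shrink d (k s)).
  by rewrite -bdd_functionalD //; congr zs; apply/funext => s; rewrite addrC subrK.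
rewrite normed_under_shrink0 // !add0r.
have r_le s : `|k s - shrink d (k s)| <= d by exact/shrink_close/ltW.
apply: le_trans (ler_fnorm_supnorm zs_bdd rc r_le) _.
apply: le_trans (_ : fnorm zs * d <= e).
  by apply: ler_wpM2l; [exact: fnorm_ge0 | exact: supnorm_le (ltW d_gt0) r_le].
by rewrite /d mulrA ler_pdivrMr // mulrC ler_pM2l // lerDl.
Qed.

End NormedUnder.

Section PeakExtension.
Context {R : realType} {S : topologicalType} {K : set S}.
Variables (r : S -> S) (g : S -> R).
Hypotheses (S_compact : compact [set: S]) (r_cont : continuous r)
  (r_in : forall s, K (r s)) (r_id : forall s, K s -> r s = s).
Hypotheses (g_cont : continuous g) (K_zero : K = g @^-1` [set 0]).
Implicit Types (f : Ktop K -> R) (h : S -> R).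

Definition retraction (s : S) : Ktop K := exist _ (r s) (r_in s).

Lemma continuous_retraction : continuous retraction.
Proof. exact: (@continuous_comp_initial (subK K) S S (@proj1_sig S K)). Qed.

Lemma retraction_val (k : Ktop K) : retraction (proj1_sig k) = k.
Proof.
case: k => s Ks; rewrite /retraction /=; move: (r_in s); rewrite r_id // => Ks'.
by congr exist; exact: Prop_irrelevance.
Qed.

Definition restrict (h : S -> R) : Ktop K -> R := fun k => h (proj1_sig k).

Lemma continuous_restrict {h} : continuous h -> continuous (restrict h).
Proof.
move=> hc k; apply: continuous_comp; last exact: hc.
exact: (@initial_continuous (subK K) S (@proj1_sig S K)).
Qed.

Definition peak (s : S) : R := (1 + `|g s|)^-1.

Let one_norm_gt0 s : 0 < 1 + `|g s|.
Proof. by rewrite ltr_wpDr. Qed.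

Lemma peak_ge0 s : 0 <= peak s.
Proof. by rewrite invr_ge0 ltW. Qed.

Lemma peak_le1 s : peak s <= 1.
Proof. by rewrite invf_le1 // lerDl. Qed.

Lemma peak_eq1 s : peak s = 1 <-> K s.
Proof.
rewrite K_zero /peak; split => [|/= ->]; last by rewrite normr0 addr0 invr1.
by move/eqP; rewrite invr_eq1 -subr_eq0 addrC addKr normr_eq0 => /eqP.
Qed.

Lemma continuous_peak : continuous peak.
Proof.
apply: continuous_invf => [s|]; first by rewrite gt_eqF.
exact: continuous_addf (continuous_cstf 1) (continuous_normf g_cont).
Qed.

Definition extend (f : Ktop K -> R) (s : S) : R := f (retraction s) * peak s.

Lemma restrict_extend f : restrict (extend f) = f.
Proof.
apply/funext => k; rewrite /restrict /extend retraction_val.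
by have /peak_eq1 -> := proj2_sig k; rewrite mulr1.
Qed.

Lemma continuous_extend {f} : continuous f -> continuous (extend f).
Proof.
move=> fc; apply: continuous_mulf continuous_peak => s.
by apply: continuous_comp; [exact: continuous_retraction | exact: fc].
Qed.

Lemma Ktop_continuous_bounded {f} :
  continuous f -> exists C : R, forall k : Ktop K, `|f k| <= C.
Proof.
move=> fc; have [C ext_le] := continuous_bounded S_compact (continuous_extend fc).
by exists C => k; rewrite -(restrict_extend f); exact: ext_le.
Qed.

Lemma norm_extend_le {f} s : continuous f -> `|extend f s| <= supnorm f * peak s.
Proof.
move=> fc; have [C f_le] := Ktop_continuous_bounded fc.
by rewrite normrM (ger0_norm (peak_ge0 s)) ler_wpM2r ?peak_ge0 ?(ler_supnorm f_le).
Qed.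

Lemma supnorm_extend f : continuous f -> supnorm (extend f) = supnorm f.
Proof.
move=> fc; apply/le_anti/andP; split.
  apply: supnorm_le => [|s]; first exact: supnorm_ge0.
  apply: le_trans (norm_extend_le s fc) _.
  by rewrite ler_piMr ?supnorm_ge0 ?peak_le1.
have [C ext_le] := continuous_bounded S_compact (continuous_extend fc).
apply: supnorm_le => [|k]; first exact: supnorm_ge0.
have := ler_supnorm ext_le (proj1_sig k).
by rewrite -/(restrict (extend f) k) restrict_extend.
Qed.

Lemma supnorm_restrict_le {h} : continuous h -> supnorm (restrict h) <= supnorm h.
Proof.
move=> hc; have [C h_le] := continuous_bounded S_compact hc.
by apply: supnorm_le => [|k]; [exact: supnorm_ge0 | exact: ler_supnorm h_le _].
Qed.

Lemma extend_lin_isometry : lin_isometry extend.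
Proof.
split; first by move=> f; exact: continuous_extend.
split; last exact: supnorm_extend.
by move=> a f1 f2 _ _; apply/funext => s; rewrite /extend mulrDl mulrA.
Qed.

Section Dual.
Variable xs : (Ktop K -> R) -> R.
Hypothesis xs_bdd : bdd_functional xs.

Lemma bdd_functional_restrict : bdd_functional (fun h => xs (restrict h)).
Proof.
split=> [a h1 h2 h1c h2c|].
  exact: (bdd_functional_lin xs_bdd a (continuous_restrict h1c)
                                      (continuous_restrict h2c)).
exists (fnorm xs) => h hc; have [C h_le] := continuous_bounded S_compact hc.
apply: le_trans (ler_fnorm_supnorm xs_bdd (continuous_restrict hc) (fun k => h_le _)) _.
by rewrite ler_wpM2l ?fnorm_ge0 ?supnorm_restrict_le.
Qed.

Lemma fnorm_restrict : fnorm (fun h => xs (restrict h)) = fnorm xs.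
Proof.
apply/le_anti/andP; split.
  apply: (fnorm_le bdd_functional_restrict (fnorm_ge0 xs_bdd)) => h hc h_le1.
  have [C h_le] := continuous_bounded S_compact hc.
  apply: le_trans (ler_fnorm_supnorm xs_bdd (continuous_restrict hc) (fun k => h_le _)) _.
  rewrite ler_piMr ?fnorm_ge0 //; exact: le_trans (supnorm_restrict_le hc) h_le1.
apply: (fnorm_le xs_bdd (fnorm_ge0 bdd_functional_restrict)) => f fc f_le1.
rewrite -(restrict_extend f).
apply: (fnorm_ub bdd_functional_restrict (continuous_extend fc)).
by rewrite supnorm_extend.
Qed.

Variable zs : (S -> R) -> R.
Hypotheses (zs_bdd : bdd_functional zs) (zs_ext : feq (fun f => zs (extend f)) xs).
Hypothesis zs_norm : fnorm zs = fnorm xs.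

Lemma normed_under_peak : normed_under zs peak.
Proof.
move=> e e_gt0; have [f [fc f_le1] f_big] := fnorm_adherent xs_bdd e_gt0.
exists (fun s => Num.sg (xs f) * extend f s).
  split=> [|s]; first exact/continuous_scalef/continuous_extend.
  rewrite normrM; apply: le_trans (_ : 1 * (supnorm f * peak s) <= _).
    apply: ler_pM; rewrite ?normr_ge0 ?(norm_extend_le _ fc) //.
    by rewrite normr_sg lern1 leq_b1.
  by rewrite mul1r ler_piMl ?peak_ge0.
by rewrite bdd_functionalZ ?zs_ext ?zs_norm -?normrEsg //; exact: continuous_extend.
Qed.

Lemma extension_unique : feq zs (fun h => xs (restrict h)).
Proof.
move=> h hc; pose f := restrict h; have fc : continuous f := continuous_restrict hc.
have kc : continuous (fun s => h s - extend f s).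
  exact: continuous_subf hc (continuous_extend fc).
have k0 s : peak s = 1 -> h s - extend f s = 0.
  move=> /peak_eq1 Ks; have := congr1 (fun u => u (exist _ s Ks)) (restrict_extend f).
  by rewrite /restrict /= => ->; rewrite subrr.
have -> : zs h = zs (extend f) + zs (fun s => h s - extend f s).
  rewrite -bdd_functionalD //; last exact: continuous_extend.
  by congr zs; apply/funext => s; rewrite addrC subrK.
rewrite (normed_under_annihilates zs_bdd normed_under_peak S_compact continuous_peak
  peak_le1 kc k0) addr0.
exact: zs_ext.
Qed.

End Dual.

Lemma extend_U_embedding : U_embedding extend.
Proof.
split=> [|xs xs_bdd]; first exact: extend_lin_isometry.
exists (fun h => xs (restrict h)); split.
- exact: bdd_functional_restrict.
- by move=> f fc /=; rewrite restrict_extend.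
- exact: fnorm_restrict.
- by move=> zs zs_bdd zs_ext zs_norm; exact: extension_unique.
Qed.

End PeakExtension.

Theorem proposition6p24 (R : realType) (S : topologicalType) (K : set S) :
  compact [set: S] -> hausdorff_space S -> closed K ->
  is_retract K -> is_zero_set R K ->
  exists T : (Ktop K -> R) -> (S -> R), U_embedding T.
Proof.
move=> S_compact _ _ [r [r_cont r_range r_id]] [g [g_cont K_zero]].
have r_in s : K (r s) by rewrite -r_range; exists s.
by exists (extend r g r_in); exact: extend_U_embedding.
Qed.
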